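(* Let $U,M_1,M_2$ be as below, let $M_3$ be as below, set $M_4=M_1U$, $M_5=M_2U$, and let $G'_E$ be the semigroup generated by $M_1,\dots,M_5$, where $$U=\begin{bmatrix}-1&1&0\\0&1&0\\0&0&1\end{bmatrix},\ M_1=\begin{bmatrix}3&-4&4\\7&-7&8\\6&-6&7\end{bmatrix},\ M_2=\begin{bmatrix}-4&3&4\\-7&7&8\\-6&6&7\end{bmatrix},\ M_3=\begin{bmatrix}1&3&4\\0&7&8\\0&6&7\end{bmatrix}.$$ For $M\in G'_E$ and an associated pair $\langle a,b,c\rangle\in\mathfrak{P}_E$, define $M\langle a,b,c\rangle$ to be the associated pair containing the triple $M(a,b,c)_u$, where $(a,b,c)_u$ is the upper triple of $\langle a,b,c\rangle$ and $M(a,b,c)_u$ is the matrix product with the column vector. Then this defines an action of $G'_E$ on $\mathfrak{P}_E$.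
   Context: An Eisenstein triple is a triple $(a,b,c)\in\mathbb{Z}^3_{\ge0}\setminus\{(0,0,0)\}$ with $a^2-ab+b^2=c^2$; it is primitive if $a\le b$ and $\gcd(a,b,c)=1$. For a primitive Eisenstein triple $(a,b,c)$, $(b-a,b,c)$ is also one; the unordered pair of these two triples is the associated pair $\langle a,b,c\rangle$, and $\mathfrak{P}_E$ is the set of all associated pairs. In an associated pair, the triple with $b>2a$ is called the upper triple, denoted $(a,b,c)_u$. *)

From HB Require Import structures.
From mathcomp Require Import all_boot all_order all_algebra.
From mathcomp Require Import finmap.
Set Implicit Arguments. Unset Strict Implicit. Unset Printing Implicit Defensive.
Import Order.TTheory GRing.Theory Num.Theory.
Local Open Scope ring_scope.


Definition trip := 'cV[int]_3.
Definition i0 : 'I_3 := @Ordinal 3 0 isT.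
Definition i1 : 'I_3 := @Ordinal 3 1 isT.
Definition i2 : 'I_3 := @Ordinal 3 2 isT.
Definition ta (t : trip) : int := t i0 ord0.
Definition tb (t : trip) : int := t i1 ord0.
Definition tc (t : trip) : int := t i2 ord0.
Definition mktrip (a b c : int) : trip :=
  \col_i (if i == i0 then a else if i == i1 then b else c).

Definition eisenstein (t : trip) : Prop :=
  [/\ 0 <= ta t, 0 <= tb t, 0 <= tc t,
      ~ (ta t = 0 /\ tb t = 0 /\ tc t = 0) &
      ta t ^+ 2 - ta t * tb t + tb t ^+ 2 = tc t ^+ 2].

Definition primitive (t : trip) : Prop :=
  [/\ eisenstein t, ta t <= tb t & gcdz (ta t) (gcdz (tb t) (tc t)) = 1].

Definition partner (t : trip) : trip := mktrip (tb t - ta t) (tb t) (tc t).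

Definition assoc_pair (t : trip) : {fset trip} := [fset t; partner t]%fset.

Definition PE (S : {fset trip}) : Prop :=
  exists t, primitive t /\ S = assoc_pair t.

Definition upper (S : {fset trip}) (u : trip) : Prop :=
  u \in S /\ 2 * ta u < tb u.

Definition mx3 (a11 a12 a13 a21 a22 a23 a31 a32 a33 : int) : 'M[int]_3 :=
  \matrix_(i < 3, j < 3)
    nth 0 (nth [::] [:: [:: a11; a12; a13]; [:: a21; a22; a23];
                        [:: a31; a32; a33]] i) j.

Definition Umx : 'M[int]_3 := mx3 (-1) 1 0  0 1 0  0 0 1.
Definition M1 : 'M[int]_3 := mx3 3 (-4) 4  7 (-7) 8  6 (-6) 7.
Definition M2 : 'M[int]_3 := mx3 (-4) 3 4  (-7) 7 8  (-6) 6 7.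
Definition M3 : 'M[int]_3 := mx3 1 3 4  0 7 8  0 6 7.
Definition M4 : 'M[int]_3 := M1 *m Umx.
Definition M5 : 'M[int]_3 := M2 *m Umx.

Inductive GE' : 'M[int]_3 -> Prop :=
| GE'_1 : GE' M1
| GE'_2 : GE' M2
| GE'_3 : GE' M3
| GE'_4 : GE' M4
| GE'_5 : GE' M5
| GE'_mul M N : GE' M -> GE' N -> GE' (M *m N).

Definition actR (M : 'M[int]_3) (S S' : {fset trip}) : Prop :=
  PE S' /\ exists u, upper S u /\ M *m u \in S'.

(* The generators U, M1, M2, M3 are unimodular automorphs of the form
   a^2 - ab + b^2 - c^2, so they preserve the Eisenstein equation and the gcd
   of the entries.  M1 and M2 send every nonzero nonnegative solution with
   a <= b into the upper cone 2a < b, and M3 preserves that cone; as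
   M4 = M1 U, M5 = M2 U and U maps the upper cone into the solutions with
   a <= b, every element of G'_E maps upper primitive triples to upper
   primitive triples.  An associated pair has exactly one upper triple, since
   b = 2a would give c^2 = 3a^2 and hence 3 | gcd(a, b, c).  So M<S> is the
   pair of M u for the upper triple u of S, and (MN)<S> = M<N<S>> because
   N u is the upper triple of N<S>. *)

From mathcomp Require Import all_boot all_order all_algebra zify ring.
From mathcomp Require Import finmap.
Set Implicit Arguments.
Unset Strict Implicit.
Unset Printing Implicit Defensive.
Import Order.TTheory GRing.Theory Num.Theory.
Local Open Scope ring_scope.

Lemma ta_mktrip a b c : ta (mktrip a b c) = a. Proof. by rewrite /ta mxE. Qed.
Lemma tb_mktrip a b c : tb (mktrip a b c) = b. Proof. by rewrite /tb mxE. Qed.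
Lemma tc_mktrip a b c : tc (mktrip a b c) = c. Proof. by rewrite /tc mxE. Qed.
Definition mktripE := (ta_mktrip, tb_mktrip, tc_mktrip).

Lemma mul_mx3 a11 a12 a13 a21 a22 a23 a31 a32 a33 (t : trip) :
  mx3 a11 a12 a13 a21 a22 a23 a31 a32 a33 *m t =
  mktrip (a11 * ta t + a12 * tb t + a13 * tc t)
         (a21 * ta t + a22 * tb t + a23 * tc t)
         (a31 * ta t + a32 * tb t + a33 * tc t).
Proof.
apply/matrixP => i j.
rewrite (ord1 j) !mxE !big_ord_recl big_ord0 addr0 addrA !mxE.
by case: i => [[|[|[|//]]] ?];
  congr (_ * t _ _ + _ * t _ _ + _ * t _ _); apply/val_inj.
Qed.

Lemma partner_mulmx t : partner t = Umx *m t.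
Proof. by rewrite /Umx mul_mx3; congr mktrip; ring. Qed.

Lemma mulUmx : Umx *m Umx = 1%:M.
Proof.
apply/matrixP => i j; rewrite !mxE !big_ord_recl big_ord0 !mxE /=.
by case: i => [[|[|[|//]]] ?]; case: j => [[|[|[|//]]] ?].
Qed.

Lemma partnerK : involutive partner.
Proof. by move=> t; rewrite !partner_mulmx mulmxA mulUmx mul1mx. Qed.

Definition gcd3 (t : trip) : int := gcdz (ta t) (gcdz (tb t) (tc t)).

Lemma dvdz_gcd3 (t : trip) (i : 'I_3) : (gcd3 t %| t i ord0)%Z.
Proof.
have dvd_a := dvdz_gcdl (ta t) (gcdz (tb t) (tc t)).
have := dvdz_gcdr (ta t) (gcdz (tb t) (tc t)).
rewrite dvdz_gcd => /andP[dvd_b dvd_c].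
by case: i => [[|[|[|//]]] Hi]; rewrite (bool_irrelevance Hi isT).
Qed.

Lemma dvdz_gcd3_mulmx (N : 'M[int]_3) t : (gcd3 t %| gcd3 (N *m t))%Z.
Proof.
have dvd_entry i : (gcd3 t %| (N *m t) i ord0)%Z.
  by rewrite mxE; apply: rpred_sum => j _; apply/dvdz_mull/dvdz_gcd3.
by rewrite !dvdz_gcd !dvd_entry.
Qed.

Lemma gcd3_unitmx M t : M \in unitmx -> gcd3 (M *m t) = gcd3 t.
Proof.
move=> M_unit; have := dvdz_gcd3_mulmx (invmx M) (M *m t).
rewrite mulmxA mulVmx // mul1mx => dvd_l; have dvd_r := dvdz_gcd3_mulmx M t.
by congr Posz; apply/eqP; rewrite eqn_dvd; apply/andP.
Qed.

Definition eisform (t : trip) : int :=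
  ta t ^+ 2 - ta t * tb t + tb t ^+ 2 - tc t ^+ 2.

Definition eisform_invariant (M : 'M[int]_3) :=
  forall t, eisform (M *m t) = eisform t.

Lemma eisform_invariantM M N :
  eisform_invariant M -> eisform_invariant N -> eisform_invariant (M *m N).
Proof. by move=> inv_M inv_N t; rewrite -mulmxA inv_M inv_N. Qed.

Lemma generators_eisform_invariant :
  [/\ eisform_invariant Umx, eisform_invariant M1, eisform_invariant M2
    & eisform_invariant M3].
Proof. by split=> t; rewrite mul_mx3 /eisform !mktripE; ring. Qed.

Lemma generators_unitmx :
  [/\ Umx \in unitmx, M1 \in unitmx, M2 \in unitmx & M3 \in unitmx].
Proof.
have unit_of_linv (N A : 'M[int]_3) : N *m A = 1%:M -> A \in unitmx.
  by case/mulmx1_unit.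
split; [ exact: unit_of_linv mulUmx
       | apply: (unit_of_linv (mx3 (-1) 4 (-4) (-1) (-3) 4 0 (-6) 7))
       | apply: (unit_of_linv (mx3 (-1) (-3) 4 (-1) 4 (-4) 0 (-6) 7))
       | apply: (unit_of_linv (mx3 1 3 (-4) 0 7 (-8) 0 (-6) 7)) ];
  apply/matrixP => i j; rewrite !mxE !big_ord_recl big_ord0 !mxE /=;
  by case: i => [[|[|[|//]]] ?]; case: j => [[|[|[|//]]] ?].
Qed.

Lemma GE'_eisform_invariant M : GE' M -> eisform_invariant M.
Proof.
have [inv_U inv_M1 inv_M2 inv_M3] := generators_eisform_invariant.
by elim=> // [||N N' _ inv_N _ inv_N']; apply: eisform_invariantM.
Qed.

Lemma GE'_unitmx M : GE' M -> M \in unitmx.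
Proof.
have [U_unit M1_unit M2_unit M3_unit] := generators_unitmx.
by elim=> // [||N N' _ N_unit _ N'_unit];
  rewrite ?/M4 ?/M5 unitmx_mul; apply/andP.
Qed.

(* [0 < tb t] excludes the zero triple, whose image under M1 is not upper. *)
Definition ordered_triple (t : trip) :=
  [/\ 0 <= ta t, ta t <= tb t, 0 < tb t & 0 <= tc t].

Definition upper_triple (t : trip) :=
  [/\ 0 <= ta t, 2 * ta t < tb t & 0 <= tc t].

Lemma upper_ordered t : upper_triple t -> ordered_triple t.
Proof. by case=> ha hab hc; split=> //; lia. Qed.

Lemma U_upper_ordered t : upper_triple t -> ordered_triple (Umx *m t).
Proof. by rewrite mul_mx3 => -[ha hab hc]; split; rewrite !mktripE; lia. Qed.

Lemma M1_ordered_upper t :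
  eisform t = 0 -> ordered_triple t -> upper_triple (M1 *m t).
Proof.
rewrite mul_mx3 /eisform => e0 [ha hab hb hc]; rewrite !expr2 in e0.
by split; rewrite !mktripE; nia.
Qed.

Lemma M2_ordered_upper t :
  eisform t = 0 -> ordered_triple t -> upper_triple (M2 *m t).
Proof.
rewrite mul_mx3 /eisform => e0 [ha hab hb hc]; rewrite !expr2 in e0.
by split; rewrite !mktripE; nia.
Qed.

Lemma M3_upper t : eisform t = 0 -> upper_triple t -> upper_triple (M3 *m t).
Proof.
rewrite mul_mx3 /eisform => e0 [ha hab hc]; rewrite !expr2 in e0.
by split; rewrite !mktripE; nia.
Qed.

Lemma GE'_upper_triple M t :
  GE' M -> eisform t = 0 -> upper_triple t -> upper_triple (M *m t).
Proof.
have [inv_U _ _ _] := generators_eisform_invariant.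
move=> gM; elim: gM t => [||||| N N' _ IHN gN' IHN'] t e0 up_t.
- exact/M1_ordered_upper/upper_ordered.
- exact/M2_ordered_upper/upper_ordered.
- exact: M3_upper.
- by rewrite -mulmxA; apply: M1_ordered_upper;
    [rewrite inv_U | apply: U_upper_ordered].
- by rewrite -mulmxA; apply: M2_ordered_upper;
    [rewrite inv_U | apply: U_upper_ordered].
- by rewrite -mulmxA; apply: IHN;
    [rewrite (GE'_eisform_invariant gN') | apply: IHN'].
Qed.

Lemma sqr_eq3_dvdn (m n : nat) :
  (m * m = 3 * (n * n))%N -> ((3 %| m) && (3 %| n))%N.
Proof.
have dvd3_sqr k : (3 %| k * k)%N -> (3 %| k)%N by rewrite Euclid_dvdM // orbb.
move=> e; have /dvdnP[k def_m] : (3 %| m)%N.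
  by apply: dvd3_sqr; rewrite e dvdn_mulr.
rewrite def_m dvdn_mull //=; apply: dvd3_sqr; apply/dvdnP; exists (k * k)%N.
by move: e; rewrite def_m; lia.
Qed.

Lemma primitive_neq_double t : primitive t -> tb t != 2 * ta t.
Proof.
case=> -[ha _ hc _ e] _ g1; apply/eqP => hb; rewrite hb in e g1.
have /andP[dvd_c dvd_a] : ((3 %| `|tc t|) && (3 %| `|ta t|))%N.
  by apply: sqr_eq3_dvdn; move: e; rewrite !expr2; lia.
have : (3 %| gcdz (ta t) (gcdz (2 * ta t) (tc t)))%Z.
  by rewrite !dvdz_gcd !dvdzE dvd_a dvd_c abszM dvdn_mull.
by rewrite g1.
Qed.

Lemma eisformP t :
  reflect (ta t ^+ 2 - ta t * tb t + tb t ^+ 2 = tc t ^+ 2) (eisform t == 0).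
Proof. by rewrite subr_eq0; apply: eqP. Qed.

Definition upper_primitive (t : trip) :=
  [/\ eisform t = 0, upper_triple t & gcd3 t = 1].

Lemma upper_primitiveP t :
  upper_primitive t <-> primitive t /\ 2 * ta t < tb t.
Proof.
split=> [[/eqP/eisformP e [ha hab hc] g1] | ].
  by do !split=> //; lia.
by case=> -[[ha _ hc _ /eisformP/eqP e] _ g1] hab.
Qed.

Lemma GE'_upper_primitive M t :
  GE' M -> upper_primitive t -> upper_primitive (M *m t).
Proof.
move=> gM [e0 up_t g1]; split; first by rewrite GE'_eisform_invariant.
  exact: GE'_upper_triple.
by rewrite gcd3_unitmx ?GE'_unitmx.
Qed.

Lemma primitive_partner t : primitive t -> primitive (partner t).
Proof.
have [inv_U _ _ _] := generators_eisform_invariant.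
have [U_unit _ _ _] := generators_unitmx.
case=> -[ha hb hc nz /eisformP/eqP e] hab g1.
have /eisformP e' : eisform (partner t) == 0 by rewrite partner_mulmx inv_U e.
have g1' : gcd3 (partner t) = 1 by rewrite partner_mulmx gcd3_unitmx.
move: e' g1'; rewrite /primitive /eisenstein /partner /gcd3 !mktripE => e' g1'.
by do !split=> //; lia.
Qed.

Lemma mem_assoc_pair t u : u \in assoc_pair t -> assoc_pair u = assoc_pair t.
Proof.
rewrite in_fset2 => /orP[] /eqP -> //.
by apply/fsetP => x; rewrite !in_fset2 partnerK orbC.
Qed.

Lemma PE_eq_assoc_pair S u : PE S -> u \in S -> S = assoc_pair u.
Proof. by case=> t [_ ->] /mem_assoc_pair ->. Qed.

Lemma PE_mem_primitive S u : PE S -> u \in S -> primitive u.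
Proof.
case=> t [prim_t ->]; rewrite in_fset2 => /orP[] /eqP ->//.
exact: primitive_partner.
Qed.

Lemma PE_upper_primitive S u : PE S -> upper S u -> upper_primitive u.
Proof.
move=> PS [u_S hu]; apply/upper_primitiveP.
by split=> //; apply: PE_mem_primitive u_S.
Qed.

Lemma PE_upper_exists_unique S : PE S -> exists! u, upper S u.
Proof.
move=> [t [prim_t def_S]].
have upper_uniq u v : upper S u -> upper S v -> u = v.
  rewrite def_S => -[u_S hu] [v_S hv]; move: u_S v_S hu hv; rewrite !in_fset2.
  by move=> /orP[]/eqP-> /orP[]/eqP-> //; rewrite /partner !mktripE; lia.
suff [u up_u] : exists u, upper S u.
  by exists u; split=> // v; apply: upper_uniq.
rewrite def_S; have [hab | hba] := ltrP (2 * ta t) (tb t).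
  by exists t; rewrite /upper in_fset2 eqxx.
exists (partner t); rewrite /upper in_fset2 eqxx orbT; split=> //.
by have := primitive_neq_double prim_t; rewrite /partner !mktripE; lia.
Qed.

Lemma actR_exists_unique M S : GE' M -> PE S -> exists! S', actR M S S'.
Proof.
move=> gM PS; have [u [up_u uniq_u]] := PE_upper_exists_unique PS.
have /upper_primitiveP[prim_Mu _] :=
  GE'_upper_primitive gM (PE_upper_primitive PS up_u).
exists (assoc_pair (M *m u)); split.
  by split; [exists (M *m u) | exists u; rewrite in_fset2 eqxx].
move=> S' [PS' [v [up_v Mv_S']]].
by rewrite (PE_eq_assoc_pair PS' Mv_S') (uniq_u v up_v).
Qed.

Lemma actR_mul M N S S1 S2 :
  GE' N -> PE S -> actR N S S1 -> actR M S1 S2 -> actR (M *m N) S S2.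
Proof.
move=> gN PS [PS1 [u [up_u Nu_S1]]] [PS2 [v [up_v Mv_S2]]].
split=> //; exists u; split=> //.
have /upper_primitiveP[_ hNu] :=
  GE'_upper_primitive gN (PE_upper_primitive PS up_u).
have [w [_ uniq_w]] := PE_upper_exists_unique PS1.
rewrite -mulmxA (_ : N *m u = v) //.
by rewrite -(uniq_w _ (conj Nu_S1 hNu)) (uniq_w _ up_v).
Qed.

Theorem lemma6p3 :
  (* the upper triple of an associated pair is well defined *)
  (forall S, PE S -> exists! u, upper S u) /\
  (* M<a,b,c> is a well-defined element of P_E *)
  (forall M S, GE' M -> PE S -> exists! S', actR M S S') /\
  (* compatibility with the semigroup law: (MN)<S> = M<N<S>> *)
  (forall M N S S1 S2, GE' M -> GE' N -> PE S ->
     actR N S S1 -> actR M S1 S2 -> actR (M *m N) S S2).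
Proof.
split; first exact: PE_upper_exists_unique.
split; first exact: actR_exists_unique.
by move=> M N S S1 S2 _; apply: actR_mul.
Qed.
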